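(* For every integer $n \geq 2$, there exists a Kainen drawing of $K_{4,n}$ in $S_{h(4,n)}$, where $h(4,n) = \lfloor (n-2)/2 \rfloor$.
   Context: $S_g$ is the closed orientable surface of genus $g$. A drawing of a graph in a surface is a locally injective map with vertices mapped to distinct points, no vertex in the interior of an edge, and finitely many crossings (identifications of interior points of two edges). A Kainen drawing of $K_{m,n}$ in $S_g$ is a drawing with exactly $mn - 2(m+n-2+2g)$ crossings (Kainen's lower bound on the crossing number of $K_{m,n}$ in $S_g$). *)

From HB Require Import structures.
From mathcomp Require Import all_boot all_order all_algebra.
From mathcomp Require Import all_classical all_reals all_analysis.
Set Implicit Arguments. Unset Strict Implicit. Unset Printing Implicit Defensive.
Import Order.TTheory GRing.Theory Num.Theory.
Import numFieldNormedType.Exports.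
Local Open Scope classical_set_scope.
Local Open Scope ring_scope.

Section KainenDefs.
Variable R : realType.

Definition pt2 := (R * R)%type.
Definition pt3 := (R * R * R)%type.

Definition eucl2 (p q : pt2) : R :=
  Num.sqrt ((p.1 - q.1) ^+ 2 + (p.2 - q.2) ^+ 2).

(* The closed orientable surface S_g is realised as the double of the planar
   domain D_g = (closed unit disk) minus g disjoint open disks of radius
   1/(2(g+2)) centred at (-1 + 2(i+1)/(g+2), 0), i < g.
   hfun g p >= 0 iff p in D_g, and hfun g p = 0 iff p lies on the boundary of
   D_g.  S_g = { (x,y,z) | (x,y) in D_g, z = +/- hfun g (x,y) }, i.e. two copies
   of D_g glued along their boundary (g+1 circles): a closed orientable surface
   of Euler characteristic 2(1-g) = 2 - 2g, i.e. of genus g. *)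
Definition hole_center (g : nat) (i : nat) : pt2 :=
  (-1 + 2 * (i.+1)%:R / (g.+2)%:R, 0).
Definition hole_radius (g : nat) : R := 1 / (2 * (g.+2)%:R).

Definition hfun (g : nat) (p : pt2) : R :=
  \big[Order.min/(1 - eucl2 p (0, 0))]_(i < g)
     (eucl2 p (hole_center g i) - hole_radius g).

Definition surface (g : nat) : set pt3 :=
  [set x | 0 <= hfun g (x.1.1, x.1.2) /\ x.2 ^+ 2 = hfun g (x.1.1, x.1.2) ^+ 2].

Record drawing (m n g : nat) := Drawing {
  vpos : 'I_m + 'I_n -> pt3;
  gam : 'I_m * 'I_n -> R -> pt3;
  vpos_in : forall v, surface g (vpos v);
  vpos_inj : injective vpos;
  gam_in : forall e t, 0 <= t <= 1 -> surface g (gam e t);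
  gam_cont : forall e, {within `[0, 1], continuous (gam e)};
  gam_start : forall e, gam e 0 = vpos (inl e.1);
  gam_end : forall e, gam e 1 = vpos (inr e.2);
  no_vertex_on_edge : forall v e t, 0 < t < 1 -> gam e t <> vpos v;
  loc_inj_edge : forall e t, 0 < t < 1 -> exists2 d : R, 0 < d &
      forall s s', 0 <= s <= 1 -> 0 <= s' <= 1 ->
        `|s - t| < d -> `|s' - t| < d -> gam e s = gam e s' -> s = s';
  loc_inj_left : forall i : 'I_m, exists2 d : R, 0 < d &
      forall (j j' : 'I_n) s s', 0 <= s < d -> 0 <= s' < d ->
        gam (i, j) s = gam (i, j') s' ->
        (j = j' /\ s = s') \/ (s = 0 /\ s' = 0);
  loc_inj_right : forall j : 'I_n, exists2 d : R, 0 < d &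
      forall (i i' : 'I_m) s s', 1 - d < s <= 1 -> 1 - d < s' <= 1 ->
        gam (i, j) s = gam (i', j) s' ->
        (i = i' /\ s = s') \/ (s = 1 /\ s' = 1)
}.

Definition epoint (m n : nat) := (('I_m * 'I_n) * R)%type.

Definition crossings m n g (D : drawing m n g) : set (set (epoint m n)) :=
  [set S | exists p q : epoint m n,
     [/\ p <> q, 0 < p.2 < 1, 0 < q.2 < 1,
         gam D p.1 p.2 = gam D q.1 q.2 & S = [set p; q]]].

Definition kainen_bound (m n g : nat) : int :=
  (m * n)%:Z - 2 * ((m + n)%:Z - 2 + 2 * g%:Z).

Definition kainen_drawing m n g (D : drawing m n g) : Prop :=
  exists k : nat, (crossings D #= `I_k)%card /\ k%:Z = kainen_bound m n g.

End KainenDefs.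

From HB Require Import structures.
From mathcomp Require Import all_boot all_order all_algebra.
From mathcomp Require Import all_classical all_reals all_analysis.
From mathcomp Require Import ring lra zify.
Set Implicit Arguments. Unset Strict Implicit. Unset Printing Implicit Defensive.
Import Order.TTheory GRing.Theory Num.Theory.
Import numFieldNormedType.Exports.

(* Write n = 2g + 2 + e with e in {0, 1}; Kainen's bound is then 2e.  The
   surface S_g is the double of the disk D_g with g holes centred on the x-axis,
   so the 2g + 2 points where the x-axis meets the boundary of D_g are shared by
   both sheets.  Put the B-vertices there and the four A-vertices at (0, +-3/4)
   on the two sheets: every A-vertex reaches all B-vertices by piecewise linear
   spokes inside its own half of its own sheet, so K_{4,2g+2} is drawn without
   crossings.  For e = 1 the extra B-vertex is the boundary point (0, 1): the
   upper A-vertices reach it by a vertical segment, the lower ones by a detour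
   between the last hole and (1, 0), which crosses only the spoke from the upper
   A-vertex of its sheet to (1, 0), giving 2 crossings. *)

Section Surface.
Local Open Scope classical_set_scope.
Local Open Scope ring_scope.
Variable R : realType.
Implicit Types (g : nat) (p q : pt2 R).

Definition sqdist p q : R := (p.1 - q.1) ^+ 2 + (p.2 - q.2) ^+ 2.

Definition interior_pt g p : Prop :=
  sqdist p (0, 0) < 1 /\
  forall i : 'I_g, hole_radius R g ^+ 2 < sqdist p (hole_center R g i).

Lemma hole_radius_gt0 g : 0 < hole_radius R g.
Proof. by rewrite /hole_radius divr_gt0 // mulr_gt0 // ltr0n. Qed.

Lemma eucl2_lt p q (r : R) : 0 < r -> (eucl2 p q < r) = (sqdist p q < r ^+ 2).
Proof. by move=> r0; rewrite -[r in LHS]gtr0_norm // -sqrtr_sqr ltr_sqrt ?exprn_gt0. Qed.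

Lemma eucl2_le p q (r : R) : 0 <= r -> (eucl2 p q <= r) = (sqdist p q <= r ^+ 2).
Proof. by move=> r0; rewrite -[r in LHS]ger0_norm // -sqrtr_sqr ler_sqrt ?sqr_ge0. Qed.

Lemma hfun_gt0 g p : interior_pt g p -> 0 < hfun g p.
Proof.
case=> disk holes; apply: (big_ind (fun v => 0 < v)).
- by rewrite subr_gt0 eucl2_lt ?expr1n.
- by move=> a b a0 b0; rewrite lt_min a0 b0.
- move=> i _; have r0 := ltW (hole_radius_gt0 g).
  by rewrite subr_gt0 ltNge eucl2_le // -ltNge holes.
Qed.

Lemma hfun_ge0 g p : sqdist p (0, 0) <= 1 ->
  (forall i : 'I_g, hole_radius R g ^+ 2 <= sqdist p (hole_center R g i)) ->
  0 <= hfun g p.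
Proof.
move=> disk holes; apply: le_bigmin => [|i _].
- by rewrite subr_ge0 eucl2_le ?expr1n.
- have r0 := hole_radius_gt0 g.
  by rewrite subr_ge0 leNgt eucl2_lt // -leNgt holes.
Qed.

Lemma hfun_eq0 g p : sqdist p (0, 0) <= 1 ->
  (forall i : 'I_g, hole_radius R g ^+ 2 <= sqdist p (hole_center R g i)) ->
  sqdist p (0, 0) = 1 \/ (exists i : 'I_g, sqdist p (hole_center R g i) = hole_radius R g ^+ 2) ->
  hfun g p = 0.
Proof.
move=> disk holes onbd; apply/eqP; rewrite eq_le hfun_ge0 // andbT.
have eucl2E q r : 0 <= r -> sqdist p q = r ^+ 2 -> eucl2 p q = r.
  by move=> r0 E; rewrite /eucl2 -/(sqdist p q) E sqrtr_sqr ger0_norm.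
case: onbd => [E|[i E]].
- apply: le_trans (bigmin_le_id _ _ _ _) _.
  by rewrite (eucl2E _ 1) ?subrr // expr1n.
- apply: le_trans (bigmin_le _ i _) _.
  by rewrite (eucl2E _ (hole_radius R g)) ?subrr // ltW // hole_radius_gt0.
Qed.

Lemma sqdist_continuous q : continuous (sqdist ^~ q).
Proof.
move=> p; apply: cvgD; apply: cvgM; apply: cvgB;
  solve [exact: cvg_fst | exact: cvg_snd | exact: cvg_cst].
Qed.

Lemma hfun_continuous g : continuous (@hfun R g).
Proof.
have eucl2_cont q : continuous (fun p => eucl2 p q).
  by move=> p; apply: continuous_comp (@sqdist_continuous q p) _; exact: sqrt_continuous.
suff cont_big (r : seq 'I_g) : continuous (fun p => \big[Order.min/1 - eucl2 p (0, 0)]_(i <- r)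
    (eucl2 p (hole_center R g i) - hole_radius R g)) by exact: cont_big.
elim: r => [|i r IH] p.
- under eq_fun do rewrite big_nil.
  by apply: cvgB; [exact: cvg_cst | exact: eucl2_cont].
- under eq_fun do rewrite big_cons.
  apply: (@continuous_min R _ (fun p => eucl2 p (hole_center R g i) - hole_radius R g));
    last exact: IH.
  by apply: cvgB; [exact: eucl2_cont | exact: cvg_cst].
Qed.

Lemma sqr_norm_convex (v x1 y1 x2 y2 : R) : 0 <= v <= 1 ->
  ((1 - v) * x1 + v * x2) ^+ 2 + ((1 - v) * y1 + v * y2) ^+ 2 <=
  (1 - v) * (x1 ^+ 2 + y1 ^+ 2) + v * (x2 ^+ 2 + y2 ^+ 2).
Proof.
move=> hv; rewrite -subr_ge0.
have -> : (1 - v) * (x1 ^+ 2 + y1 ^+ 2) + v * (x2 ^+ 2 + y2 ^+ 2) -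
    (((1 - v) * x1 + v * x2) ^+ 2 + ((1 - v) * y1 + v * y2) ^+ 2) =
    v * (1 - v) * ((x1 - x2) ^+ 2 + (y1 - y2) ^+ 2) by ring.
by apply: mulr_ge0; [apply: mulr_ge0; lra | rewrite addr_ge0 ?sqr_ge0].
Qed.

Lemma lift_in_surface g p (s : R) : 0 <= hfun g p -> s ^+ 2 = 1 ->
  surface g (p, s * hfun g p).
Proof. by case: p => x y h s2; split => //=; rewrite exprMn s2 mul1r. Qed.

End Surface.

Section Construction.
Local Open Scope classical_set_scope.
Local Open Scope ring_scope.
Variables (R : realType) (g : nat).
Implicit Types (x y t : R) (i : 'I_4) (j k : nat).

Definition gap : R := 2 / g.+2%:R.
Definition hole_x k : R := -1 + k.+1%:R * gap.
Definition nbdry : nat := g.*2.+2.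

(* For j < nbdry, the points (bdx j, 0) are where the x-axis meets the boundary
   of D_g: -1, the two ends of the horizontal diameter of each hole, and 1. *)
Definition bdx j : R :=
  if j == 0%N then -1 else if j == g.*2.+1 then 1
  else -1 + (j%:R / 2 + 1 / 4) * gap.
Definition kneex j : R :=
  if j == 0%N then -1 + gap / 2 else if j == g.*2.+1 then 1 - gap / 2
  else bdx j.

Lemma gap_facts : [/\ 0 < gap, gap <= 1 & gap * g%:R = 2 - 2 * gap].
Proof.
have g2 : g.+2%:R != 0 :> R by rewrite pnatr_eq0.
split.
- by rewrite divr_gt0 // ltr0n.
- by rewrite ler_pdivrMr ?ltr0n // mul1r ler_nat.
- by rewrite /gap -!natr1; field; rewrite !natr1.
Qed.

Lemma hole_centerE k : hole_center R g k = (hole_x k, 0).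
Proof. by rewrite /hole_center /hole_x /gap mulrA [2 * _]mulrC. Qed.

Lemma hole_radiusE : hole_radius R g = gap / 4.
Proof.
have g2 : g.+2%:R != 0 :> R by rewrite pnatr_eq0.
by rewrite /hole_radius /gap; field.
Qed.

Lemma hole_x_bounds k : (k < g)%N -> -1 + gap <= hole_x k <= 1 - 2 * gap.
Proof.
move=> kg; have [g0 g1 gg] := gap_facts; rewrite /hole_x.
have : k.+1%:R * gap <= g%:R * gap by rewrite ler_pM2r // ler_nat.
have : 1 * gap <= k.+1%:R * gap by rewrite ler_pM2r // ler1n.
lra.
Qed.

Lemma interior_ptI x y : x ^+ 2 + y ^+ 2 < 1 ->
  (forall k, (k < g)%N -> (gap / 4) ^+ 2 < (x - hole_x k) ^+ 2 + y ^+ 2) ->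
  interior_pt g (x, y).
Proof.
move=> disk holes; split; first by rewrite /sqdist /= !subr0.
by move=> i; rewrite hole_centerE hole_radiusE /sqdist /= subr0 holes.
Qed.

Lemma interior_pt_reflect x y (s : R) : s ^+ 2 = 1 ->
  interior_pt g (x, y) -> interior_pt g (x, s * y).
Proof.
move=> s2 [disk holes]; split; last move=> i; [move: disk | move: (holes i)];
  by rewrite /sqdist ?hole_centerE /= !subr0 [(s * y) ^+ 2]exprMn s2 mul1r.
Qed.

Lemma hfun_eq0_on_axis x : -1 <= x <= 1 ->
  (forall k, (k < g)%N -> (gap / 4) ^+ 2 <= (x - hole_x k) ^+ 2) ->
  x ^+ 2 = 1 \/ (exists2 k, (k < g)%N & (x - hole_x k) ^+ 2 = (gap / 4) ^+ 2) ->
  hfun g (x, 0) = 0.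
Proof.
move=> x1 holes onbd; apply: hfun_eq0.
- by rewrite /sqdist /= !subr0 expr0n addr0; nra.
- by move=> i; rewrite hole_centerE hole_radiusE /sqdist /= subrr expr0n addr0 holes.
- case: onbd => [E|[k kg E]]; [left | right].
  + by rewrite /sqdist /= !subr0 expr0n addr0.
  + exists (Ordinal kg).
    by rewrite hole_centerE hole_radiusE /sqdist /= subrr expr0n addr0.
Qed.

Variant bdx_spec j : R -> R -> Prop :=
  | BdxLeft of j = 0%N : bdx_spec j (-1) (-1 + gap / 2)
  | BdxRight of j = g.*2.+1 : bdx_spec j 1 (1 - gap / 2)
  | BdxHole of (0 < j <= g.*2)%N :
      bdx_spec j (-1 + (j%:R / 2 + 1 / 4) * gap) (-1 + (j%:R / 2 + 1 / 4) * gap).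

Lemma bdxP j : (j < nbdry)%N -> bdx_spec j (bdx j) (kneex j).
Proof.
move=> jN; rewrite /kneex /bdx.
have [->|j0] := eqVneq j 0%N; first exact: BdxLeft.
have [->|jl] := eqVneq j g.*2.+1; first exact: BdxRight.
by apply: BdxHole; move: jN j0 jl; rewrite /nbdry; lia.
Qed.

Lemma bdx_kneex_last : bdx g.*2.+1 = 1 /\ kneex g.*2.+1 = 1 - gap / 2.
Proof. by rewrite /kneex /bdx eqxx. Qed.

Lemma hole_bdx_bounds j : (0 < j <= g.*2)%N ->
  -1 + 3 * gap / 4 <= -1 + (j%:R / 2 + 1 / 4) * gap <= 1 - 7 * gap / 4.
Proof.
case/andP=> j0 jg; have [g0 g1 gg] := gap_facts.
have : 1 * gap <= j%:R * gap by rewrite ler_pM2r // ler1n.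
have : j%:R * gap <= (g.*2)%:R * gap by rewrite ler_pM2r // ler_nat.
rewrite -mul2n natrM; lra.
Qed.

Lemma kneex_bounds j : (j < nbdry)%N -> -1 + gap / 2 <= kneex j <= 1 - gap / 2.
Proof.
move=> jN; have [g0 g1 gg] := gap_facts.
case: (bdxP jN) => [_|_|jmid]; try lra.
by have := hole_bdx_bounds jmid; lra.
Qed.

Lemma bdx_le1 j : (j < nbdry)%N -> bdx j <= 1.
Proof.
move=> jN; have [g0 g1 gg] := gap_facts.
case: (bdxP jN) => [_|_|jmid]; try lra.
by have := hole_bdx_bounds jmid; lra.
Qed.

Lemma bdx_kneex_not_last j : (j < nbdry)%N -> j != g.*2.+1 ->
  kneex j <= 1 - 3 * gap / 2 /\ bdx j <= 1 - 3 * gap / 2.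
Proof.
move=> jN jl; have [g0 g1 gg] := gap_facts.
case: (bdxP jN) => [_|jr|jmid]; first (split; lra).
- by rewrite jr eqxx in jl.
- by have := hole_bdx_bounds jmid; split; lra.
Qed.

Lemma bdx_kneex_mono j j' : (j < j')%N -> (j' < nbdry)%N ->
  bdx j < bdx j' /\ kneex j < kneex j'.
Proof.
move=> jj' j'N; have jN := ltn_trans jj' j'N; have [g0 g1 gg] := gap_facts.
case: (bdxP jN) => [j0|jr|jmid]; case: (bdxP j'N) => [j'0|j'r|j'mid];
  try (exfalso; move: jj' j'N; rewrite /nbdry; lia).
- by split; lra.
- by have := hole_bdx_bounds j'mid; split; lra.
- by have := hole_bdx_bounds jmid; split; lra.
- have : j%:R * gap + gap <= j'%:R * gap.
    by rewrite -[X in _ + X]mul1r -mulrDl ler_pM2r // natr1 ler_nat.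
  by split; lra.
Qed.

Lemma hole_bdx_dist j k : (0 < j <= g.*2)%N ->
  (gap / 4) ^+ 2 <= (-1 + (j%:R / 2 + 1 / 4) * gap - hole_x k) ^+ 2 /\
  (k = (j.-1)./2 -> (-1 + (j%:R / 2 + 1 / 4) * gap - hole_x k) ^+ 2 = (gap / 4) ^+ 2).
Proof.
move=> jmid; rewrite /hole_x.
(* bdx j - hole_x k is an odd multiple of gap / 4 *)
have -> : -1 + (j%:R / 2 + 1 / 4) * gap - (-1 + k.+1%:R * gap) =
    gap / 4 * ((j.*2)%:R - (k.*2.*2 + 3)%:R).
  by rewrite -natr1 natrD -!mul2n !natrM; field.
rewrite [(gap / 4 * _) ^+ 2]exprMn; split.
- have [g0 _ _] := gap_facts.
  rewrite -[X in X <= _]mulr1 ler_pM2l; last by rewrite exprn_gt0 // divr_gt0.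
  have : j.*2 != k.*2.*2 + 3 by apply/negP => /eqP/(congr1 odd); rewrite oddD !odd_double.
  case: ltngtP => // [lt|lt] _; have := lt; rewrite -(ler_nat R) -natr1; nra.
- move=> ->; rewrite -[RHS]mulr1; congr (_ * _).
  have := odd_double_half j.-1; case: (odd _) => /= E.
  + have -> : j.*2 = ((j.-1)./2).*2.*2 + 4 by move: E jmid; lia.
    by rewrite natrD; ring.
  + have -> : j.*2 = ((j.-1)./2).*2.*2 + 2 by move: E jmid; lia.
    by rewrite natrD; ring.
Qed.

Definition ramp (a b t : R) : R := Order.min (Order.max (a * t - b) 0) 1.

Lemma ramp_lo a b t : a * t <= b -> ramp a b t = 0.
Proof. by move=> h; rewrite /ramp max_r ?min_l //; lra. Qed.

Lemma ramp_mid a b t : b <= a * t <= b + 1 -> ramp a b t = a * t - b.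
Proof.
move=> h; have h0 : 0 <= a * t - b by lra.
have h1 : a * t - b <= 1 by lra.
by rewrite /ramp max_l // min_l.
Qed.

Lemma ramp_hi a b t : b + 1 <= a * t -> ramp a b t = 1.
Proof.
move=> h; have h0 : 0 <= a * t - b by lra.
have h1 : 1 <= a * t - b by lra.
by rewrite /ramp max_l // min_r.
Qed.

Lemma ramp_continuous a b : continuous (ramp a b).
Proof.
move=> t; apply: (@continuous_min R R (fun t => Order.max (a * t - b) 0)).
- apply: (@continuous_max R R (fun t => a * t - b)); last exact: cvg_cst.
  by apply: cvgB; [apply: cvgM; [exact: cvg_cst | exact: cvg_id] | exact: cvg_cst].
- exact: cvg_cst.
Qed.

Lemma ramp2_lo t : 0 <= t <= 1 / 2 -> ramp 2 0 t = 2 * t /\ ramp 2 1 t = 0.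
Proof. by move=> ht; rewrite (@ramp_lo 2 1) ?(@ramp_mid 2 0) ?subr0 //; lra. Qed.

Lemma ramp2_hi t : 1 / 2 <= t <= 1 -> ramp 2 0 t = 1 /\ ramp 2 1 t = 2 * t - 1.
Proof. by move=> ht; rewrite (@ramp_hi 2 0) ?(@ramp_mid 2 1) //; lra. Qed.

(** * Spokes *)

Definition yA : R := 3 / 4.
Definition yknee : R := gap / 2.

(* The spoke to (bdx j, 0) runs straight from (0, yA) to the knee
   (kneex j, yknee) for t <= 1/2, then straight down to the boundary. *)
Definition spoke_x j t : R := kneex j * ramp 2 0 t + (bdx j - kneex j) * ramp 2 1 t.
Definition spoke_y t : R := yA - (yA - yknee) * ramp 2 0 t - yknee * ramp 2 1 t.

Lemma spoke_lo j t : 0 <= t <= 1 / 2 ->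
  spoke_x j t = kneex j * (2 * t) /\ spoke_y t = yA - (yA - yknee) * (2 * t).
Proof. by move=> /ramp2_lo[h0 h1]; rewrite /spoke_x /spoke_y h0 h1 !mulr0 !addr0 subr0. Qed.

Lemma spoke_hi j t : 1 / 2 <= t <= 1 ->
  spoke_x j t = kneex j + (bdx j - kneex j) * (2 * t - 1) /\
  spoke_y t = yknee * (2 - 2 * t).
Proof. by move=> /ramp2_hi[h0 h1]; rewrite /spoke_x /spoke_y h0 h1 mulr1; split; ring. Qed.

Lemma spoke_y_bounds t : 0 < t < 1 -> 0 < spoke_y t < yA.
Proof.
move=> ht; have [g0 g1 _] := gap_facts.
case: (lerP t (1 / 2)) => h.
- have ht' : 0 <= t <= 1 / 2 by lra.
  by have [_ ->] := spoke_lo 0 ht'; rewrite /yA /yknee; nra.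
- have ht' : 1 / 2 <= t <= 1 by lra.
  by have [_ ->] := spoke_hi 0 ht'; rewrite /yA /yknee; nra.
Qed.

Lemma spoke_interior_lo j t : (j < nbdry)%N -> 0 < t <= 1 / 2 ->
  interior_pt g (spoke_x j t, spoke_y t).
Proof.
move=> jN ht; have [g0 g1 gg] := gap_facts; have kb := kneex_bounds jN.
have ht' : 0 <= t <= 1 / 2 by lra.
have [-> ->] := spoke_lo j ht'; rewrite /yA /yknee.
set v := 2 * t.
have v0 : 0 < v by rewrite /v; lra.
have v01 : 0 <= v <= 1 by rewrite /v; lra.
have yb : gap / 2 <= 3 / 4 - (3 / 4 - gap / 2) * v by nra.
apply: interior_ptI => [|k kg].
- have -> : kneex j * v = (1 - v) * 0 + v * kneex j by ring.
  have -> : 3 / 4 - (3 / 4 - gap / 2) * v = (1 - v) * (3 / 4) + v * (gap / 2) by ring.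
  apply: le_lt_trans (sqr_norm_convex _ _ _ _ v01) _.
  have : kneex j ^+ 2 <= (1 - gap / 2) ^+ 2 by nra.
  nra.
- have := sqr_ge0 (kneex j * v - hole_x k); nra.
Qed.

Lemma spoke_interior j t : (j < nbdry)%N -> 0 < t < 1 ->
  interior_pt g (spoke_x j t, spoke_y t).
Proof.
move=> jN ht; have [g0 g1 gg] := gap_facts.
case: (lerP t (1 / 2)) => h; first by apply: spoke_interior_lo => //; lra.
have ht' : 1 / 2 <= t <= 1 by lra.
have [-> ->] := spoke_hi j ht'; rewrite /yknee.
set a := gap / 2 * (2 - 2 * t).
have a0 : 0 < a by rewrite /a; nra.
have a1 : a <= gap / 2 by rewrite /a; nra.
case: (bdxP jN) => [_|_|jmid].
- have -> : -1 + gap / 2 + (-1 - (-1 + gap / 2)) * (2 * t - 1) = -1 + a by rewrite /a; ring.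
  apply: interior_ptI => [|k kg]; first nra.
  by have := hole_x_bounds kg; nra.
- have -> : 1 - gap / 2 + (1 - (1 - gap / 2)) * (2 * t - 1) = 1 - a by rewrite /a; ring.
  apply: interior_ptI => [|k kg]; first nra.
  by have := hole_x_bounds kg; nra.
- rewrite subrr mul0r addr0; have := hole_bdx_bounds jmid.
  set x := -1 + _ * gap => xb.
  apply: interior_ptI => [|k kg].
  + have : x ^+ 2 <= (1 - 3 * gap / 4) ^+ 2 by nra.
    have : a ^+ 2 <= (gap / 2) ^+ 2 by nra.
    nra.
  + have [xk _] := hole_bdx_dist k jmid; rewrite -/x in xk.
    have : 0 < a ^+ 2 by rewrite exprn_gt0.
    lra.
Qed.

Lemma spoke_y_decr : {in `[0, 1] &, {homo spoke_y : t t' /~ t < t'}}.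
Proof.
move=> t' t; rewrite !in_itv /= => ht' ht tt'; have [g0 g1 _] := gap_facts.
case: (lerP t' (1 / 2)) => h'.
  have ht2' : 0 <= t' <= 1 / 2 by lra.
  have ht2 : 0 <= t <= 1 / 2 by lra.
  by rewrite (spoke_lo 0 ht2').2 (spoke_lo 0 ht2).2 /yA /yknee; nra.
have ht2' : 1 / 2 <= t' <= 1 by lra.
rewrite (spoke_hi 0 ht2').2; case: (lerP t (1 / 2)) => h.
- have ht2 : 0 <= t <= 1 / 2 by lra.
  by rewrite (spoke_lo 0 ht2).2 /yA /yknee; nra.
- have ht2 : 1 / 2 <= t <= 1 by lra.
  by rewrite (spoke_hi 0 ht2).2 /yknee; nra.
Qed.

Lemma spoke_y_inj : {in `[0, 1] &, injective spoke_y}.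
Proof. exact: dec_inj_in (le_nmono_in spoke_y_decr). Qed.

Lemma spoke_x_incr t : 0 < t < 1 ->
  {in gtn nbdry &, {homo spoke_x ^~ t : j j' / (j < j')%N >-> j < j'}}.
Proof.
move=> ht j j' _ j'N jj'; have [bb kk] := bdx_kneex_mono jj' j'N.
case: (lerP t (1 / 2)) => h.
- have ht' : 0 <= t <= 1 / 2 by lra.
  by rewrite (spoke_lo j ht').1 (spoke_lo j' ht').1; nra.
- have ht' : 1 / 2 <= t <= 1 by lra.
  by rewrite (spoke_hi j ht').1 (spoke_hi j' ht').1; nra.
Qed.

Lemma spoke_x_inj t : 0 < t < 1 -> {in gtn nbdry &, injective (spoke_x ^~ t)}.
Proof. by move=> ht; exact: inc_inj_in (le_mono_in (spoke_x_incr ht)). Qed.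

(** * The detour *)

Definition xdetour : R := 1 - gap / 4.

(* The detour from (0, -yA) to (0, 1) passes between the last hole and (1, 0):
   straight to (xdetour, 0), up to (xdetour, yknee), then straight to (0, 1). *)
Definition detour_x t : R := xdetour * (ramp 2 0 t - ramp 4 3 t).
Definition detour_y t : R :=
  - yA + yA * ramp 2 0 t + yknee * ramp 4 2 t + (1 - yknee) * ramp 4 3 t.

Lemma detour_lo t : 0 <= t <= 1 / 2 ->
  detour_x t = xdetour * (2 * t) /\ detour_y t = - yA + yA * (2 * t).
Proof.
move=> ht; rewrite /detour_x /detour_y (ramp2_lo ht).1 (@ramp_lo 4 3) ?(@ramp_lo 4 2); lra.
Qed.

Lemma detour_mid t : 1 / 2 <= t <= 3 / 4 ->
  detour_x t = xdetour /\ detour_y t = yknee * (4 * t - 2).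
Proof.
move=> ht; rewrite /detour_x /detour_y (@ramp_hi 2 0) ?(@ramp_lo 4 3) ?(@ramp_mid 4 2); lra.
Qed.

Lemma detour_hi t : 3 / 4 <= t <= 1 ->
  detour_x t = xdetour * (1 - (4 * t - 3)) /\
  detour_y t = yknee + (1 - yknee) * (4 * t - 3).
Proof.
move=> ht; rewrite /detour_x /detour_y (@ramp_hi 2 0) ?(@ramp_hi 4 2) ?(@ramp_mid 4 3); lra.
Qed.

Lemma detour_interior_lo t : 0 < t <= 1 / 2 ->
  0 < detour_x t /\ interior_pt g (detour_x t, detour_y t).
Proof.
move=> ht; have [g0 g1 gg] := gap_facts.
have ht' : 0 <= t <= 1 / 2 by lra.
have [-> ->] := detour_lo ht'; rewrite /xdetour /yA.
set v := 2 * t.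
have v0 : 0 < v by rewrite /v; lra.
have v01 : 0 <= v <= 1 by rewrite /v; lra.
split; first nra.
apply: interior_ptI => [|k kg].
- have -> : (1 - gap / 4) * v = (1 - v) * 0 + v * (1 - gap / 4) by ring.
  have -> : - (3 / 4) + 3 / 4 * v = (1 - v) * (- (3 / 4)) + v * 0 by ring.
  by apply: le_lt_trans (sqr_norm_convex _ _ _ _ v01) _; nra.
- have /andP[c1 c2] := hole_x_bounds kg.
  (* either the detour is still far below the axis, or it is already past the last hole *)
  case: (lerP (gap / 2) (3 / 4 - 3 / 4 * v)) => hv.
  + have : (gap / 4) ^+ 2 < (- (3 / 4) + 3 / 4 * v) ^+ 2 by nra.
    have := sqr_ge0 ((1 - gap / 4) * v - hole_x k); lra.
  + have : gap / 2 <= (1 - gap / 4) * v - hole_x k by nra.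
    have := sqr_ge0 (- (3 / 4) + 3 / 4 * v); nra.
Qed.

Lemma detour_interior t : 0 < t < 1 ->
  0 < detour_x t /\ interior_pt g (detour_x t, detour_y t).
Proof.
move=> ht; have [g0 g1 gg] := gap_facts.
case: (lerP t (1 / 2)) => h1; first by apply: detour_interior_lo; lra.
case: (lerP t (3 / 4)) => h2.
  have ht' : 1 / 2 <= t <= 3 / 4 by lra.
  have [-> ->] := detour_mid ht'; rewrite /xdetour /yknee.
  have y0 : 0 < gap / 2 * (4 * t - 2) <= gap / 2 by nra.
  split; first lra.
  apply: interior_ptI => [|k kg]; first nra.
  have /andP[c1 c2] := hole_x_bounds kg.
  have : gap / 2 <= 1 - gap / 4 - hole_x k by lra.
  have := sqr_ge0 (gap / 2 * (4 * t - 2)); nra.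
have ht' : 3 / 4 <= t <= 1 by lra.
have [-> ->] := detour_hi ht'; rewrite /xdetour /yknee.
set w := 4 * t - 3.
have w0 : 0 < w by rewrite /w; lra.
have w1 : w < 1 by rewrite /w; lra.
have w01 : 0 <= w <= 1 by lra.
split; first nra.
apply: interior_ptI => [|k kg].
- have -> : (1 - gap / 4) * (1 - w) = (1 - w) * (1 - gap / 4) + w * 0 by ring.
  have -> : gap / 2 + (1 - gap / 2) * w = (1 - w) * (gap / 2) + w * 1 by ring.
  apply: le_lt_trans (sqr_norm_convex _ _ _ _ w01) _.
  have : (1 - gap / 4) ^+ 2 + (gap / 2) ^+ 2 < 1 by nra.
  nra.
- have : gap / 2 <= gap / 2 + (1 - gap / 2) * w by rewrite lerDl mulr_ge0 //; lra.
  have := sqr_ge0 ((1 - gap / 4) * (1 - w) - hole_x k); nra.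
Qed.

Lemma detour_y_incr : {in `[0, 1] &, {homo detour_y : t t' / t < t'}}.
Proof.
move=> t t'; rewrite !in_itv /= => ht ht' tt'; have [g0 g1 _] := gap_facts.
have yk0 : 0 < yknee by rewrite /yknee; lra.
have yk1 : yknee < 1 by rewrite /yknee; lra.
case: (lerP t' (1 / 2)) => b1.
  by rewrite (detour_lo _).2 ?(detour_lo _).2 /yA; lra.
case: (lerP t' (3 / 4)) => b2.
  rewrite [detour_y t'](detour_mid _).2; last lra.
  case: (lerP t (1 / 2)) => a1.
    by rewrite (detour_lo _).2 /yA; nra.
  by rewrite (detour_mid _).2; nra.
rewrite [detour_y t'](detour_hi _).2; last lra.
case: (lerP t (1 / 2)) => a1.
  by rewrite (detour_lo _).2 /yA; nra.
case: (lerP t (3 / 4)) => a2.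
  by rewrite (detour_mid _).2; nra.
by rewrite (detour_hi _).2; nra.
Qed.

Lemma detour_y_inj : {in `[0, 1] &, injective detour_y}.
Proof. exact: inc_inj_in (le_mono_in detour_y_incr). Qed.

Definition riser_y t : R := yA + t * (1 - yA).

Lemma riser_interior t : 0 < t < 1 ->
  yA < riser_y t < 1 /\ interior_pt g (0, riser_y t).
Proof.
move=> ht; have [g0 g1 gg] := gap_facts; rewrite /riser_y /yA.
split; first nra.
apply: interior_ptI => [|k kg]; first nra.
have := sqr_ge0 (0 - hole_x k); nra.
Qed.

(* [lam x y <= 0] is the half-plane below the line through (0, yA) and the knee
   of the last spoke; every upper spoke stays in it, the end of the detour does not. *)
Definition lam x y : R := (1 - gap / 2) * (y - yA) + x * (yA - yknee).

Lemma lam_spoke_le0 j t : (j < nbdry)%N -> 0 < t < 1 ->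
  lam (spoke_x j t) (spoke_y t) <= 0.
Proof.
move=> jN ht; have [g0 g1 gg] := gap_facts.
have /andP[_ k1] := kneex_bounds jN; have b1 := bdx_le1 jN.
rewrite /lam /yA /yknee.
case: (lerP t (1 / 2)) => h.
- have ht' : 0 <= t <= 1 / 2 by lra.
  rewrite (spoke_lo j ht').1 (spoke_lo j ht').2 /yA /yknee.
  have -> : (1 - gap / 2) * (3 / 4 - (3 / 4 - gap / 2) * (2 * t) - 3 / 4) +
      kneex j * (2 * t) * (3 / 4 - gap / 2) =
      (2 * t) * (3 / 4 - gap / 2) * (kneex j - (1 - gap / 2)) by ring.
  by apply: mulr_ge0_le0; [apply: mulr_ge0|]; lra.
- have ht' : 1 / 2 <= t <= 1 by lra.
  rewrite (spoke_hi j ht').1 (spoke_hi j ht').2 /yknee.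
  set w := 2 * t - 1.
  have w0 : 0 < w by rewrite /w; lra.
  have w1 : w < 1 by rewrite /w; lra.
  have X1 : kneex j + (bdx j - kneex j) * w <= 1 - gap / 2 + gap / 2 * w by nra.
  have : (kneex j + (bdx j - kneex j) * w) * (3 / 4 - gap / 2) <=
      (1 - gap / 2 + gap / 2 * w) * (3 / 4 - gap / 2) by apply: ler_wpM2r; lra.
  have -> : 2 - 2 * t = 1 - w by rewrite /w; ring.
  nra.
Qed.

Lemma lam_detour_gt0 t : 3 / 4 < t < 1 -> 0 < lam (detour_x t) (detour_y t).
Proof.
move=> ht; have [g0 g1 gg] := gap_facts.
have ht' : 3 / 4 <= t <= 1 by lra.
rewrite (detour_hi ht').1 (detour_hi ht').2 /lam /xdetour /yknee /yA.
set w := 4 * t - 3.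
have w0 : 0 < w by rewrite /w; lra.
have w1 : w < 1 by rewrite /w; lra.
nra.
Qed.

Lemma spoke_meets_detour j t t' : (j < nbdry)%N -> 0 < t < 1 -> 0 < t' < 1 ->
  spoke_x j t = detour_x t' -> spoke_y t = detour_y t' ->
  [/\ j = g.*2.+1, t = 3 / 4 & t' = 5 / 8].
Proof.
move=> jN ht ht' EX EY; have [g0 g1 gg] := gap_facts.
have /andP[y0 y1] := spoke_y_bounds ht.
case: (lerP t' (1 / 2)) => a.
  have h : 0 <= t' <= 1 / 2 by lra.
  by exfalso; move: EY; rewrite (detour_lo h).2 /yA => EY; nra.
case: (lerP t' (3 / 4)) => b; last first.
  have := lam_spoke_le0 jN ht; rewrite EX EY.
  have h : 3 / 4 < t' < 1 by lra.
  by have := lam_detour_gt0 h; lra.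
have h' : 1 / 2 <= t' <= 3 / 4 by lra.
move: EX EY; rewrite (detour_mid h').1 (detour_mid h').2 /xdetour /yknee.
have /andP[_ k1] := kneex_bounds jN.
case: (lerP t (1 / 2)) => c.
  have h : 0 <= t <= 1 / 2 by lra.
  by rewrite (spoke_lo j h).1 (spoke_lo j h).2 /yA /yknee => EX EY; exfalso; nra.
have h : 1 / 2 <= t <= 1 by lra.
rewrite (spoke_hi j h).1 (spoke_hi j h).2 /yknee.
have [->|jl] := eqVneq j g.*2.+1.
- have [-> ->] := bdx_kneex_last => EX EY.
  have Et : t = 3 / 4 by nra.
  by split => //; subst t; nra.
- have [k2 b2] := bdx_kneex_not_last jN jl => EX EY.
  exfalso; nra.
Qed.

Lemma lower_spoke_misses_detour j t t' : (j < nbdry)%N -> 0 < t < 1 -> 0 < t' < 1 ->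
  spoke_x j t = detour_x t' -> - spoke_y t = detour_y t' -> False.
Proof.
move=> jN ht ht' EX EY; have [g0 g1 gg] := gap_facts.
have /andP[y0 y1] := spoke_y_bounds ht.
case: (lerP t' (1 / 2)) => a; last first.
  case: (lerP t' (3 / 4)) => b.
  - have h : 1 / 2 <= t' <= 3 / 4 by lra.
    by move: EY; rewrite (detour_mid h).2 /yknee => EY; nra.
  - have h : 3 / 4 <= t' <= 1 by lra.
    by move: EY; rewrite (detour_hi h).2 /yknee => EY; nra.
have h' : 0 <= t' <= 1 / 2 by lra.
move: EX EY; rewrite (detour_lo h').1 (detour_lo h').2 /xdetour /yknee /yA.
have /andP[_ k1] := kneex_bounds jN; have b1 := bdx_le1 jN.
set v := 2 * t'.
have v0 : 0 < v by rewrite /v; lra.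
have v1 : v <= 1 by rewrite /v; lra.
case: (lerP t (1 / 2)) => c.
- have h : 0 <= t <= 1 / 2 by lra.
  rewrite (spoke_lo j h).1 (spoke_lo j h).2 /yA /yknee => EX EY.
  set u := 2 * t in EX EY.
  have u0 : 0 < u by rewrite /u; lra.
  (* eliminating u and v leaves a linear condition on kneex j alone *)
  have Ev : 3 / 4 * v = (3 / 4 - gap / 2) * u by lra.
  have E : kneex j * (3 / 4) = (1 - gap / 4) * (3 / 4 - gap / 2).
    apply: (mulfI (lt0r_neq0 u0)).
    by rewrite mulrA [u * _]mulrC EX -mulrA [v * _]mulrC Ev; ring.
  have [Ej|jl] := eqVneq j g.*2.+1.
  + by move: E; rewrite Ej bdx_kneex_last.2 => E; nra.
  + by have [k2 _] := bdx_kneex_not_last jN jl; nra.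
- have h : 1 / 2 <= t <= 1 by lra.
  rewrite (spoke_hi j h).1 (spoke_hi j h).2 /yknee => EX EY.
  have Ew : 2 - 2 * t = 1 - (2 * t - 1) by ring.
  rewrite Ew in EY; set w := 2 * t - 1 in EX EY.
  have w0 : 0 < w by rewrite /w; lra.
  have w1 : w < 1 by rewrite /w; lra.
  have [Ej|jl] := eqVneq j g.*2.+1.
  + by move: EX; rewrite Ej; have [-> ->] := bdx_kneex_last => EX; nra.
  + have [k2 b2] := bdx_kneex_not_last jN jl.
    have : kneex j + (bdx j - kneex j) * w <= 1 - 3 * gap / 2 by nra.
    nra.
Qed.

(* A-vertex i lies at (0, side i * yA) on the sheet z = sheet i * hfun g (x, y). *)
Definition side i : R := if odd i then -1 else 1.
Definition sheet i : R := if (i < 2)%N then 1 else -1.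

Lemma side_sqr i : side i ^+ 2 = 1.
Proof. by rewrite /side; case: odd; rewrite ?sqrrN expr1n. Qed.

Lemma side_neq0 i : side i != 0.
Proof. by rewrite /side; case: odd; rewrite ?oppr_eq0 oner_eq0. Qed.

Lemma sheet_sqr i : sheet i ^+ 2 = 1.
Proof. by rewrite /sheet; case: (i < 2)%N; rewrite ?sqrrN expr1n. Qed.

Lemma side_inj i i' : side i = side i' -> odd i = odd i'.
Proof. by rewrite /side; case: (odd i); case: (odd i') => //; lra. Qed.

Lemma sheet_inj i i' : sheet i = sheet i' -> (i < 2)%N = (i' < 2)%N.
Proof. by rewrite /sheet; case: (i < 2)%N; case: (i' < 2)%N => //; lra. Qed.

Lemma A_vertex_inj i i' : side i = side i' -> sheet i = sheet i' -> i = i'.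
Proof.
move=> /side_inj Es /sheet_inj Et; apply: val_inj; move: Es Et.
by case: i => [[|[|[|[|i]]]] Hi] //; case: i' => [[|[|[|[|i']]]] Hi'].
Qed.

Lemma A_vertex_partner i i' : ~~ odd i -> odd i' -> sheet i = sheet i' -> i' = i.+1 :> nat.
Proof.
move=> + + /sheet_inj.
by case: i => [[|[|[|[|i]]]] Hi] //; case: i' => [[|[|[|[|i']]]] Hi'].
Qed.

(* The planar projection of the edge from A-vertex i to B-vertex j: a spoke if
   j < nbdry; for the top vertex (0, 1) (j = nbdry), the riser from the upper
   A-vertices and the detour from the lower ones. *)
Definition path i j t : pt2 R :=
  if (j < nbdry)%N then (spoke_x j t, side i * spoke_y t)
  else if odd i then (detour_x t, detour_y t) else (0, riser_y t).

Definition B_pt j : pt2 R := if (j < nbdry)%N then (bdx j, 0) else (0, 1).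

Lemma path_interior i j t : 0 < t < 1 -> interior_pt g (path i j t).
Proof.
move=> ht; rewrite /path; case: ifP => jN.
- by apply: interior_pt_reflect; [exact: side_sqr | exact: spoke_interior].
- case: (odd i); [exact: (detour_interior ht).2 | exact: (riser_interior ht).2].
Qed.

Lemma path0 i j : path i j 0 = (0, side i * yA).
Proof.
have h : 0 <= (0 : R) <= 1 / 2 by lra.
rewrite /path (spoke_lo j h).1 (spoke_lo j h).2 (detour_lo h).1 (detour_lo h).2.
rewrite /riser_y /side.
by case: ifP => _; [|case: (odd i)]; congr (_, _); ring.
Qed.

Lemma path1 i j : path i j 1 = B_pt j.
Proof.
have h : 1 / 2 <= (1 : R) <= 1 by lra.
have h' : 3 / 4 <= (1 : R) <= 1 by lra.
rewrite /path (spoke_hi j h).1 (spoke_hi j h).2 (detour_hi h').1 (detour_hi h').2.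
by rewrite /B_pt /riser_y /yknee /yA; case: ifP => _; [|case: (odd i)]; congr (_, _); ring.
Qed.

Lemma path_xy_continuous i j :
  continuous (fun t => (path i j t).1) /\ continuous (fun t => (path i j t).2).
Proof.
rewrite /path /spoke_x /spoke_y /detour_x /detour_y /riser_y.
case: (j < nbdry)%N; [|case: (odd i)]; split => t /=;
  repeat first [exact: cvg_cst | exact: cvg_id | exact: ramp_continuous
               | apply: cvgD | apply: cvgB | apply: cvgM | apply: cvgN].
Qed.

Lemma path_continuous i j : continuous (path i j).
Proof.
have [cx cy] := path_xy_continuous i j.
have -> : path i j = fun t => ((path i j t).1, (path i j t).2).
  by apply/funext => t; rewrite -surjective_pairing.
by move=> t; exact: cvg_pair (cx t) (cy t).
Qed.

(* The only crossing in the plane: the spoke from an upper A-vertex i to (1, 0)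
   meets the detour from the lower A-vertex i.+1 at (xdetour, yknee / 2). *)
Definition crossing_at i j t i' j' t' : Prop :=
  [/\ ~~ odd i, i' = i.+1 :> nat, j = g.*2.+1, j' = nbdry & t = 3 / 4 /\ t' = 5 / 8].

Lemma spoke_meets_top_path i i' j t t' : (j < nbdry)%N -> 0 < t < 1 -> 0 < t' < 1 ->
  sheet i = sheet i' -> path i j t = path i' nbdry t' -> crossing_at i j t i' nbdry t'.
Proof.
move=> jN ht ht' Et; rewrite /path jN ltnn /side.
have /andP[y0 y1] := spoke_y_bounds ht; have [/andP[r0 r1] _] := riser_interior ht'.
case Oi': (odd i'); case Oi: (odd i) => -[EX EY].
- by exfalso; apply: (lower_spoke_misses_detour jN ht ht' EX); rewrite -EY mulN1r.
- have [-> -> ->] := spoke_meets_detour jN ht ht' EX (etrans (esym (mul1r _)) EY).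
  split => //; first by rewrite Oi.
  by apply: A_vertex_partner; rewrite ?Oi ?Oi'.
- by exfalso; move: EY; rewrite /yA in y1 r0 *; nra.
- by exfalso; move: EY; rewrite /yA in y1 r0 *; nra.
Qed.

Lemma path_meet i i' j j' t t' : (j <= nbdry)%N -> (j' <= nbdry)%N ->
  0 < t < 1 -> 0 < t' < 1 -> sheet i = sheet i' -> path i j t = path i' j' t' ->
  [\/ [/\ i = i', j = j' & t = t'], crossing_at i j t i' j' t'
    | crossing_at i' j' t' i j t].
Proof.
move=> jN j'N ht ht' Et E.
have ht01 : t \in `[0, 1] by rewrite in_itv /=; lra.
have ht01' : t' \in `[0, 1] by rewrite in_itv /=; lra.
case: (ltnP j nbdry) => jl; case: (ltnP j' nbdry) => j'l.
- move: E; rewrite /path jl j'l => -[EX EY].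
  have /andP[y0 _] := spoke_y_bounds ht; have /andP[y0' _] := spoke_y_bounds ht'.
  have Es : side i = side i'.
    by move: EY; rewrite /side; case: (odd i); case: (odd i') => // EY; nra.
  move: EY; rewrite Es => /(mulfI (side_neq0 i')) /(spoke_y_inj ht01 ht01') Ett.
  subst t'; constructor 1; split => //; first exact: A_vertex_inj.
  by apply: (spoke_x_inj ht); rewrite ?inE.
- have Ej' : j' = nbdry by apply/eqP; rewrite eqn_leq j'N j'l.
  by subst j'; constructor 2; exact: spoke_meets_top_path jl ht ht' Et E.
- have Ej : j = nbdry by apply/eqP; rewrite eqn_leq jN jl.
  by subst j; constructor 3; exact: spoke_meets_top_path j'l ht' ht (esym Et) (esym E).
- have Ej : j = nbdry by apply/eqP; rewrite eqn_leq jN jl.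
  have Ej' : j' = nbdry by apply/eqP; rewrite eqn_leq j'N j'l.
  subst j j'; constructor 1; move: E; rewrite /path ltnn.
  have [x0 _] := detour_interior ht; have [x0' _] := detour_interior ht'.
  case Oi: (odd i); case Oi': (odd i') => -[EX].
  + move=> EY; split => //; last exact: detour_y_inj ht01 ht01' EY.
    by apply: A_vertex_inj; rewrite // /side Oi Oi'.
  + by move: x0; rewrite EX ltxx.
  + by move: x0'; rewrite -EX ltxx.
  + have Ett : t = t' by move: EX; rewrite /riser_y /yA; nra.
    by split => //; apply: A_vertex_inj; rewrite // /side Oi Oi'.
Qed.

Lemma crossing_point i i' : ~~ odd i -> i' = i.+1 :> nat ->
  path i g.*2.+1 (3 / 4) = path i' nbdry (5 / 8).
Proof.
move=> Oi Ei'; have Oi' : odd i' by rewrite Ei' /= Oi.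
have h1 : 1 / 2 <= (3 : R) / 4 <= 1 by lra.
have h2 : 1 / 2 <= (5 : R) / 8 <= 3 / 4 by lra.
rewrite /path ltnn /nbdry ltnSn -/nbdry Oi' /side (negbTE Oi).
have [-> ->] := detour_mid h2; have [-> ->] := spoke_hi g.*2.+1 h1.
by have [-> ->] := bdx_kneex_last; rewrite /xdetour /yknee; congr (_, _); field.
Qed.

Lemma sheet_partner i i' : ~~ odd i -> i' = i.+1 :> nat -> sheet i = sheet i'.
Proof. by rewrite /sheet; case: i i' => [[|[|[|[|i]]]] Hi] // [i' Hi'] _ /= ->. Qed.

(** * Lifting to the surface *)

Definition lift i (p : pt2 R) : pt3 R := (p, sheet i * hfun g p).
Definition edge i j t : pt3 R := lift i (path i j t).
Definition A_pos i : pt3 R := lift i (0, side i * yA).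
Definition B_pos j : pt3 R := (B_pt j, 0).

Lemma hfun_B_pt j : hfun g (B_pt j) = 0.
Proof.
have [g0 g1 gg] := gap_facts; rewrite /B_pt; case: ifP => jN.
- case: (bdxP jN) => [_|_|jmid]; apply: hfun_eq0_on_axis; try lra.
  + by move=> k kg; have := hole_x_bounds kg; nra.
  + by move=> k kg; have := hole_x_bounds kg; nra.
  + by have := hole_bdx_bounds jmid; lra.
  + by move=> k _; exact: (hole_bdx_dist k jmid).1.
  + right; exists (j.-1)./2; last exact: (hole_bdx_dist _ jmid).2.
    by rewrite ltn_half_double; move: jmid; lia.
- have top : sqdist (0, 1) (0, 0) = 1 :> R by rewrite /sqdist /= !subr0 expr0n add0r expr1n.
  apply: hfun_eq0; [by rewrite top | | by left].
  move=> i; rewrite hole_centerE hole_radiusE /sqdist /= sub0r sqrrN subr0 expr1n.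
  by have := hole_x_bounds (ltn_ord i); nra.
Qed.

Lemma B_pt_inj j j' : (j <= nbdry)%N -> (j' <= nbdry)%N -> B_pt j = B_pt j' -> j = j'.
Proof.
move=> jN j'N; rewrite /B_pt.
case: ltnP => jl; case: ltnP => j'l E.
- case: E => EX; case: (ltngtP j j') => // jj'.
  + by have [] := bdx_kneex_mono jj' j'l; rewrite EX ltxx.
  + by have [] := bdx_kneex_mono jj' jl; rewrite EX ltxx.
- by exfalso; move: E => [_ E]; lra.
- by exfalso; move: E => [_ E]; lra.
- by move: jN j'N jl j'l; lia.
Qed.

Lemma path_hfun_gt0 i j t : 0 < t < 1 -> 0 < hfun g (path i j t).
Proof. by move=> ht; apply: hfun_gt0; exact: path_interior. Qed.

Lemma A_hfun_gt0 i : 0 < hfun g (0, side i * yA).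
Proof.
have [g0 g1 gg] := gap_facts.
apply/hfun_gt0/interior_pt_reflect; first exact: side_sqr.
apply: interior_ptI => [|k kg]; rewrite /yA; first lra.
by have := sqr_ge0 (0 - hole_x k); nra.
Qed.

Lemma lift_sheet_in_surface i p : 0 <= hfun g p -> surface g (lift i p).
Proof. by move=> h; apply: lift_in_surface => //; exact: sheet_sqr. Qed.

Lemma edge_in_surface i j t : 0 <= t <= 1 -> surface g (edge i j t).
Proof.
move=> ht; apply: lift_sheet_in_surface.
have [->|t0] := eqVneq t 0; first by rewrite path0 ltW // A_hfun_gt0.
have [->|t1] := eqVneq t 1; first by rewrite path1 hfun_B_pt.
by apply/ltW/path_hfun_gt0; rewrite !lt_neqAle eq_sym t0 t1.
Qed.

Lemma edge0 i j : edge i j 0 = A_pos i.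
Proof. by rewrite /edge path0. Qed.

Lemma edge1 i j : edge i j 1 = B_pos j.
Proof. by rewrite /edge /lift path1 hfun_B_pt mulr0. Qed.

Lemma edge_eq_inv i i' j j' t t' : 0 < t < 1 -> edge i j t = edge i' j' t' ->
  path i j t = path i' j' t' /\ sheet i = sheet i'.
Proof.
move=> ht [EP Ez]; split => //; move: Ez; rewrite EP.
by apply: mulIf; rewrite gt_eqF // -EP path_hfun_gt0.
Qed.

Lemma edge_avoids_A i i' j t : 0 < t < 1 -> edge i j t <> A_pos i'.
Proof.
move=> ht [E _]; move: E; rewrite /path /side.
have /andP[y0 y1] := spoke_y_bounds ht.
have [x0 _] := detour_interior ht; have [/andP[r0 r1] _] := riser_interior ht.
case: ifP => _; [|case: (odd i)] => -[].
- by move=> _; rewrite /yA in y1 *; case: (odd i); case: (odd i') => *; lra.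
- by move=> EX; move: x0; rewrite EX ltxx.
- by rewrite /yA in r0 *; case: (odd i') => *; lra.
Qed.

Lemma edge_avoids_B i j j' t : 0 < t < 1 -> edge i j t <> B_pos j'.
Proof.
move=> ht [_ /eqP]; rewrite mulf_eq0 (gt_eqF (path_hfun_gt0 i j ht)) orbF => /eqP s0.
by have := sheet_sqr i; rewrite s0 expr2 mulr0; lra.
Qed.

Lemma B_pos_in_surface j : surface g (B_pos j).
Proof. by split; rewrite /= -surjective_pairing hfun_B_pt // expr0n. Qed.

Lemma A_pos_in_surface i : surface g (A_pos i).
Proof. exact/lift_sheet_in_surface/ltW/A_hfun_gt0. Qed.

Lemma edge_continuous i j : continuous (edge i j).
Proof.
have [cx cy] := path_xy_continuous i j.
have cz : continuous (fun t => sheet i * hfun g (path i j t)).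
  move=> t; apply: cvgM; first exact: cvg_cst.
  by apply: continuous_comp; [exact: path_continuous | exact: hfun_continuous].
have -> : edge i j = fun t => ((path i j t).1, (path i j t).2, sheet i * hfun g (path i j t)).
  by apply/funext => t; rewrite /edge /lift -surjective_pairing.
by move=> t; exact: cvg_pair (cvg_pair (cx t) (cy t)) (cz t).
Qed.

Lemma path_y_inj i j : {in `[0, 1] &, injective (fun t => (path i j t).2)}.
Proof.
move=> s s' hs hs'; rewrite /path; case: ifP => _ /=.
- by move=> /(mulfI (side_neq0 i)); exact: spoke_y_inj.
- case: (odd i) => /=; first exact: detour_y_inj.
  by rewrite /riser_y /yA => E; lra.
Qed.

Lemma edge_inj i j : {in `[0, 1] &, injective (edge i j)}.
Proof. by move=> s s' hs hs' [EP _]; exact: path_y_inj hs hs' (congr1 snd EP). Qed.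

Lemma edge_meet i i' j j' t t' : (j <= nbdry)%N -> (j' <= nbdry)%N ->
  0 < t < 1 -> 0 < t' < 1 -> edge i j t = edge i' j' t' ->
  [\/ [/\ i = i', j = j' & t = t'], crossing_at i j t i' j' t'
    | crossing_at i' j' t' i j t].
Proof. by move=> jN j'N ht ht' /(edge_eq_inv ht)[EP Et]; exact: path_meet. Qed.

Section Drawing.
Variable n : nat.
Hypothesis hn : (n <= nbdry.+1)%N.

Definition vertex_pos (v : 'I_4 + 'I_n) : pt3 R :=
  match v with inl i => A_pos i | inr j => B_pos j end.
Definition edge_arc (e : 'I_4 * 'I_n) : R -> pt3 R := edge e.1 e.2.

Lemma B_index_le (j : 'I_n) : (j <= nbdry)%N.
Proof. by rewrite -ltnS (leq_trans (ltn_ord j) hn). Qed.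

Lemma vertex_pos_in v : surface g (vertex_pos v).
Proof. by case: v => [i|j]; [exact: A_pos_in_surface | exact: B_pos_in_surface]. Qed.

Lemma vertex_pos_inj : injective vertex_pos.
Proof.
have yA0 : yA != 0 by apply: lt0r_neq0; rewrite /yA; lra.
case=> [i|j] [i'|j'] /= E.
- move: E => [/(mulIf yA0) Es]; rewrite Es => /(mulIf (lt0r_neq0 (A_hfun_gt0 i'))) Et.
  by rewrite (A_vertex_inj Es Et).
- exfalso; move: E => /(congr1 (fun p : pt3 R => p.1.2)) /=.
  by rewrite /B_pt /side /yA; case: ltnP => _; case: (odd i) => /=; lra.
- exfalso; move: E => /(congr1 (fun p : pt3 R => p.1.2)) /=.
  by rewrite /B_pt /side /yA; case: ltnP => _; case: (odd i') => /=; lra.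
- by move: E => [/(B_pt_inj (B_index_le j) (B_index_le j'))/val_inj ->].
Qed.

Lemma edge_arc_in e t : 0 <= t <= 1 -> surface g (edge_arc e t).
Proof. exact: edge_in_surface. Qed.

Lemma edge_arc_cont e : {within `[0, 1], continuous (edge_arc e)}.
Proof. exact/continuous_subspaceT/edge_continuous. Qed.

Lemma edge_arc_start e : edge_arc e 0 = vertex_pos (inl e.1).
Proof. exact: edge0. Qed.

Lemma edge_arc_end e : edge_arc e 1 = vertex_pos (inr e.2).
Proof. exact: edge1. Qed.

Lemma edge_arc_avoids_vertices v e t : 0 < t < 1 -> edge_arc e t <> vertex_pos v.
Proof. by case: v => [i|j] /=; [exact: edge_avoids_A | exact: edge_avoids_B]. Qed.

Lemma edge_arc_loc_inj e t : 0 < t < 1 -> exists2 d : R, 0 < d &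
  forall s s', 0 <= s <= 1 -> 0 <= s' <= 1 ->
    `|s - t| < d -> `|s' - t| < d -> edge_arc e s = edge_arc e s' -> s = s'.
Proof.
move=> _; exists 1 => // s s' hs hs' _ _; apply: edge_inj; rewrite in_itv //=.
Qed.

Lemma edge_arc_loc_inj_left i : exists2 d : R, 0 < d &
  forall (j j' : 'I_n) s s', 0 <= s < d -> 0 <= s' < d ->
    edge_arc (i, j) s = edge_arc (i, j') s' -> (j = j' /\ s = s') \/ (s = 0 /\ s' = 0).
Proof.
exists (1 / 2); first lra.
move=> j j' s s' /andP[s0 s1] /andP[s0' s1']; rewrite /edge_arc /= => E.
have [Es|sn0] := eqVneq s 0; have [Es'|sn0'] := eqVneq s' 0.
- by right.
- exfalso; subst s; rewrite edge0 in E.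
  have hs' : 0 < s' < 1 by rewrite lt_neqAle eq_sym sn0' s0' /=; lra.
  exact: edge_avoids_A hs' (esym E).
- exfalso; subst s'; rewrite edge0 in E.
  have hs : 0 < s < 1 by rewrite lt_neqAle eq_sym sn0 s0 /=; lra.
  exact: edge_avoids_A hs E.
- have hs : 0 < s < 1 by rewrite lt_neqAle eq_sym sn0 s0 /=; lra.
  have hs' : 0 < s' < 1 by rewrite lt_neqAle eq_sym sn0' s0' /=; lra.
  case: (edge_meet (B_index_le j) (B_index_le j') hs hs' E)
    => [[_ Ej ->]|[_ _ _ _ []]|[_ _ _ _ []]].
  + by left; split => //; apply: val_inj.
  + by move=> Es; move: s1; rewrite Es; lra.
  + by move=> Es; move: s1'; rewrite Es; lra.
Qed.

Lemma edge_arc_loc_inj_right (j : 'I_n) : exists2 d : R, 0 < d &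
  forall (i i' : 'I_4) s s', 1 - d < s <= 1 -> 1 - d < s' <= 1 ->
    edge_arc (i, j) s = edge_arc (i', j) s' -> (i = i' /\ s = s') \/ (s = 1 /\ s' = 1).
Proof.
exists (1 / 8); first lra.
move=> i i' s s' /andP[s0 s1] /andP[s0' s1']; rewrite /edge_arc /= => E.
have [Es|sn1] := eqVneq s 1; have [Es'|sn1'] := eqVneq s' 1.
- by right.
- exfalso; subst s; rewrite edge1 in E.
  have hs' : 0 < s' < 1 by rewrite [s' < 1]lt_neqAle sn1' s1' andbT; lra.
  exact: edge_avoids_B hs' (esym E).
- exfalso; subst s'; rewrite edge1 in E.
  have hs : 0 < s < 1 by rewrite [s < 1]lt_neqAle sn1 s1 andbT; lra.
  exact: edge_avoids_B hs E.
- have hs : 0 < s < 1 by rewrite [s < 1]lt_neqAle sn1 s1 andbT; lra.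
  have hs' : 0 < s' < 1 by rewrite [s' < 1]lt_neqAle sn1' s1' andbT; lra.
  case: (edge_meet (B_index_le j) (B_index_le j) hs hs' E)
    => [[-> _ ->]|[_ _ _ _ []]|[_ _ _ _ []]].
  + by left.
  + by move=> Es Es''; move: s0'; rewrite Es''; lra.
  + by move=> Es Es''; move: s0; rewrite Es''; lra.
Qed.

Definition K4n_drawing : drawing R 4 n g :=
  @Drawing R 4 n g vertex_pos edge_arc vertex_pos_in vertex_pos_inj edge_arc_in
    edge_arc_cont edge_arc_start edge_arc_end edge_arc_avoids_vertices
    edge_arc_loc_inj edge_arc_loc_inj_left edge_arc_loc_inj_right.

End Drawing.

(** * Counting crossings *)

Lemma crossings_even : crossings (K4n_drawing (leqnSn nbdry)) = set0.
Proof.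
apply/seteqP; split => // S [[[i j] t] [[[i' j'] t'] [pq /= hp hq]]].
rewrite /= /edge_arc /= => E _.
case: (edge_meet (B_index_le (leqnSn nbdry) j) (B_index_le (leqnSn nbdry) j') hp hq E).
- by case=> Ei /val_inj Ej Et; apply: pq; rewrite Ei Ej Et.
- by case=> _ _ _ Ej' _; move: (ltn_ord j'); rewrite Ej' ltnn.
- by case=> _ _ _ Ej _; move: (ltn_ord j); rewrite Ej ltnn.
Qed.

(* The crossing of the edges from the A-vertices 2k and 2k + 1, which share a sheet. *)
Definition cross_pair k : set (epoint R 4 nbdry.+1) :=
  [set ((inord k.*2, inord g.*2.+1), 3 / 4); ((inord k.*2.+1, inord nbdry), 5 / 8)].

Lemma crossing_at_pair i (j : 'I_nbdry.+1) t i' (j' : 'I_nbdry.+1) t' :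
  crossing_at i j t i' j' t' -> [set ((i, j), t); ((i', j'), t')] = cross_pair i./2.
Proof.
case=> Oi Ei' Ej Ej' [-> ->].
have Ei : (i./2).*2 = i by rewrite -[RHS]odd_double_half (negbTE Oi).
rewrite /cross_pair; have -> : inord (i./2).*2 = i by rewrite Ei inord_val.
have -> : inord (i./2).*2.+1 = i' by rewrite Ei -Ei' inord_val.
have -> : inord g.*2.+1 = j by apply: val_inj; rewrite /= inordK ?Ej.
by have -> : inord nbdry = j' by apply: val_inj; rewrite /= inordK ?Ej'.
Qed.

Lemma cross_pair_crossing k : (k < 2)%N ->
  crossings (K4n_drawing (leqnn nbdry.+1)) (cross_pair k).
Proof.
move=> k2; have Ei : (inord k.*2 : 'I_4) = k.*2 :> nat by rewrite inordK //; lia.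
have Ei' : (inord k.*2.+1 : 'I_4) = (inord k.*2 : 'I_4).+1 :> nat.
  by rewrite Ei inordK //; lia.
have Oi : ~~ odd (inord k.*2 : 'I_4) by rewrite Ei odd_double.
exists ((inord k.*2, inord g.*2.+1), 3 / 4), ((inord k.*2.+1, inord nbdry), 5 / 8).
split; [|rewrite /=; lra|rewrite /=; lra| |by []].
- by move=> /(congr1 (fun p : epoint R 4 nbdry.+1 => val p.1.1)) /=; rewrite Ei' => /n_Sn.
- rewrite /= /edge_arc /edge /lift /= !inordK //.
  by rewrite (crossing_point Oi Ei') (sheet_partner Oi Ei').
Qed.

Lemma crossings_odd : crossings (K4n_drawing (leqnn nbdry.+1)) = cross_pair @` `I_2.
Proof.
apply/seteqP; split.
- move=> S [[[i j] t] [[[i' j'] t'] [pq /= hp hq]]].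
  rewrite /= /edge_arc /= => E ->.
  have jN := B_index_le (leqnn nbdry.+1) j; have j'N := B_index_le (leqnn nbdry.+1) j'.
  have i4 : (i./2 < 2)%N by move: (ltn_ord i); lia.
  have i4' : (i'./2 < 2)%N by move: (ltn_ord i'); lia.
  case: (edge_meet jN j'N hp hq E) => [[Ei /val_inj Ej Et]|C|C].
  + by case: pq; rewrite /= Ei Ej Et.
  + by exists i./2; rewrite // (crossing_at_pair C).
  + by exists i'./2; rewrite // setUC (crossing_at_pair C).
- by move=> _ [k k2 <-]; exact: cross_pair_crossing.
Qed.

Lemma cross_pair_inj : {in `I_2 &, injective cross_pair}.
Proof.
move=> k k'; rewrite !inE /= => k2 k'2 E.
have : cross_pair k ((inord k.*2, inord g.*2.+1), 3 / 4) by left.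
rewrite E => -[|] /(congr1 (fun p : epoint R 4 nbdry.+1 => val p.1.1)) /=;
  rewrite !inordK; lia.
Qed.

Lemma K4n_drawing_even_kainen : kainen_drawing (K4n_drawing (leqnSn nbdry)).
Proof.
exists 0%N; split; last by rewrite /kainen_bound /nbdry -mul2n; lia.
by rewrite crossings_even II0; exact: card_eq00.
Qed.

Lemma K4n_drawing_odd_kainen : kainen_drawing (K4n_drawing (leqnn nbdry.+1)).
Proof.
exists 2%N; split; last by rewrite /kainen_bound /nbdry -mul2n; lia.
by rewrite crossings_odd; exact: inj_card_eq cross_pair_inj.
Qed.

End Construction.

Theorem mainTheorem14 (R : realType) (n : nat) :
  (2 <= n)%N ->
  exists D : drawing R 4 n ((n - 2) %/ 2),
    kainen_drawing D.
Proof.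
move=> n2; have [g Eg] : exists g, (n - 2) %/ 2 = g by eexists.
rewrite Eg; have [->|->] : n = nbdry g \/ n = (nbdry g).+1.
  by move: n2 Eg; rewrite /nbdry; lia.
- by exists (K4n_drawing R (leqnSn _)); exact: K4n_drawing_even_kainen.
- by exists (K4n_drawing R (leqnn _)); exact: K4n_drawing_odd_kainen.
Qed.
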